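(* Let $R$ be a commutative ring and let $R(S_\infty)$ be the set of all functions $S_\infty\to R$, with product $$(fg)(w)=\sum_{u\cdot v=w}(-1)^{\ell(u)+\ell(v)-\ell(w)}f(u)g(v),$$ the sum over pairs $(u,v)$ whose product in the degenerate Hecke algebra is $w$; let $\underline 1$ be the characteristic function of the identity permutation. Let $f,g,h\in R(S_\infty)$, and assume that for every $w\in S_\infty$ the element $\sum_{u:\,u\cdot w=w}(-1)^{\ell(u)}f(u)$ is not a zero divisor in $R$. Then (i) if $fg=f$ then $g=\underline 1$; (ii) if $fh=\underline 1$ then $hf=\underline 1$.
   Context: $S_\infty=\bigcup_nS_n$. Degenerate Hecke algebra: the $\mathbb Z$-algebra generated by $s_1,s_2,\dots$ with $s_i^2=s_i$, $s_is_j=s_js_i$ for $|i-j|>1$, $s_is_{i+1}s_i=s_{i+1}s_is_{i+1}$; each permutation is identified with the product of generators along one of its reduced words, and these products are again permutations, so the sums above are finite. $\ell$ denotes Coxeter length. This product on $R(S_\infty)$ is associative with identity $\underline 1$. *)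

From HB Require Import structures.
From mathcomp Require Import all_boot all_order all_algebra.
From mathcomp Require Import boolp classical_sets fsbigop.
Set Implicit Arguments. Unset Strict Implicit. Unset Printing Implicit Defensive.
Import GRing.Theory.

(* A permutation is stored in one-line notation w(0) w(1) ... w(n-1) with all
   trailing fixed points removed (a canonical form); w(j) = j for j >= n. *)
Definition canon (s : seq nat) : bool :=
  perm_eq s (iota 0 (size s)) && ((s == [::]) || (last 0 s != (size s).-1)).

Record sinf := SInf { sinf_val : seq nat; sinf_canon : canon sinf_val }.
HB.instance Definition _ := [isSub for sinf_val].
HB.instance Definition _ := [Countable of sinf by <:].

Definition app (w : sinf) (j : nat) : nat := nth j (sinf_val w) j.

Definition sinf_id : sinf := @SInf [::] isT.

Definition invs (N : nat) (g : nat -> nat) : nat :=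
  \sum_(i < N) \sum_(j < N) ((i < j) && (g j < g i)).
Definition ell (w : sinf) : nat := invs (size (sinf_val w)) (app w).

Definition s_ (i : nat) (j : nat) : nat :=
  if j == i then i.+1 else if j == i.+1 then i else j.

(* evaluation of the word a = [a1;...;ak] as the permutation s_a1 ... s_ak
   (right multiplication by s_i is precomposition with s_i) *)
Definition evalw (a : seq nat) : nat -> nat :=
  foldl (fun g i => g \o s_ i) id a.

Definition reduced_word_of (a : seq nat) (u : sinf) : Prop :=
  (forall j, evalw a j = app u j) /\ size a = ell u.

(* Multiplying out T_a1 ... T_ak with T_i^2 = T_i from left to right:
   T_x T_i = T_(x s_i) if l(x s_i) > l(x), and T_x otherwise.
   All partial products permute only {0,..,N-1}, N = max letter + 2, so their
   lengths are computed by invs N. *)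
Definition dem (a : seq nat) : nat -> nat :=
  let N := (foldr maxn 0 a).+2 in
  foldl (fun g i => if invs N g < invs N (g \o s_ i) then g \o s_ i else g) id a.

Definition hmul (u v w : sinf) : Prop :=
  exists a b, reduced_word_of a u /\ reduced_word_of b v /\
              (forall j, dem (a ++ b) j = app w j).

Local Open Scope ring_scope.
Local Open Scope classical_set_scope.

Definition hstar (R : comPzRingType) (f g : sinf -> R) : sinf -> R :=
  fun w => \sum_(p \in [set p : sinf * sinf | hmul p.1 p.2 w])
             (-1) ^+ (ell p.1 + ell p.2 - ell w)%N * f p.1 * g p.2.

Definition hone (R : comPzRingType) : sinf -> R :=
  fun w => (w == sinf_id)%:R.

Definition fix_sum (R : comPzRingType) (f : sinf -> R) (w : sinf) : R :=
  \sum_(u \in [set u : sinf | hmul u w w]) (-1) ^+ ell u * f u.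

Definition non_zero_divisor (R : comPzRingType) (a : R) : Prop :=
  forall x : R, a * x = 0 -> x = 0.

(* The rank function r_w(a, c) = #{k >= a | w k < c} determines a finitary
   permutation w, and the rank function of a degenerate Hecke product u . v is
   the min-plus product of r_v and r_u; this is checked one letter of a reduced
   word at a time.  Hence the product is well defined and associative with unit
   1, ell (u . v) <= ell u + ell v (so signs combine), and r_v <= r_(u . v)
   entrywise, with equality only if u . v = v, so that "v is a proper right
   factor of w" is well founded.  Thus R(S_infinity) is an associative ring with
   unit 1.  If fg = f, induct along right factors: at w all g(v) with v a proper
   right factor of w already equal 1(v), and (fg)(w) = f(w) collapses to
   fix_sum f w * (g(w) - 1(w)) = 0, whence g(w) = 1(w) since fix_sum f w is not
   a zero divisor.  Finally fh = 1 gives f(hf) = (fh)f = f, hence hf = 1. *)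

From Pilot Require Import Defs.
From mathcomp Require Import all_boot all_algebra.
From mathcomp Require Import zify ring.
From mathcomp Require Import boolp classical_sets fsbigop.
Set Implicit Arguments. Unset Strict Implicit. Unset Printing Implicit Defensive.
Import GRing.Theory.

Definition fixed_from (N : nat) (g : nat -> nat) := forall k, N <= k -> g k = k.

Definition perm_below (N : nat) (g : nat -> nat) := injective g /\ fixed_from N g.

Lemma perm_below_lt N g k : perm_below N g -> k < N -> g k < N.
Proof.
move=> [g_inj g_fix] ltkN; rewrite ltnNge; apply/negP => leNgk.
by have /g_inj := g_fix _ leNgk; lia.
Qed.

Lemma perm_below_widen N M g : perm_below N g -> N <= M -> perm_below M g.
Proof. by move=> [g_inj g_fix] leNM; split=> // k leMk; apply: g_fix; lia. Qed.

Lemma perm_below_id N : perm_below N id.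
Proof. by split. Qed.

Lemma perm_below_comp N g h :
  perm_below N g -> perm_below N h -> perm_below N (g \o h).
Proof.
move=> [g_inj g_fix] [h_inj h_fix]; split; first exact: inj_comp.
by move=> k leNk /=; rewrite h_fix // g_fix.
Qed.

Lemma s_K i : involutive (s_ i).
Proof. by move=> j; rewrite /s_; do ! (case: eqP => /=); lia. Qed.

Lemma perm_below_s N i : i.+2 <= N -> perm_below N (s_ i).
Proof.
move=> ltiN; split; first exact: inv_inj (s_K i).
by move=> k leNk; rewrite /s_; do ! (case: eqP => /=); lia.
Qed.

Lemma sum_ord_perm N h (F : nat -> nat) : perm_below N h ->
  \sum_(k < N) F (h k) = \sum_(k < N) F k.
Proof.
move=> hN; pose hI (k : 'I_N) := Ordinal (perm_below_lt hN (ltn_ord k)).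
have hI_inj : injective hI by move=> k l /(congr1 val) /(proj1 hN) /val_inj.
by rewrite [RHS](reindex_inj hI_inj).
Qed.

Lemma sum_ord_ltn N c : \sum_(k < N) (k < c) = minn N c.
Proof.
elim: N => [|N IH]; first by rewrite big_ord0; lia.
by rewrite big_ord_recr /= IH; case: (ltnP N c); lia.
Qed.

Lemma sum_ord_range N a b : \sum_(k < N) ((a <= k) && (k < b)) = minn N b - a.
Proof.
elim: N => [|N IH]; first by rewrite big_ord0; lia.
by rewrite big_ord_recr /= IH; case: (ltnP N b); case: (leqP a N) => /=; lia.
Qed.

Lemma sum_ord_eq N i (P : nat -> bool) : i < N ->
  \sum_(k < N) ((k == i :> nat) && P k) = P i.
Proof.
move=> ltiN; rewrite (bigD1 (Ordinal ltiN)) //= eqxx big1 ?addn0 //.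
by move=> k /eqP neq; case: eqP => // eq_ki; case: neq; apply: val_inj.
Qed.

(** * Rank functions and their min-plus products *)

(* the rank function of [g] as soon as [N] bounds the support of [g] *)
Definition rk N (g : nat -> nat) a c := \sum_(k < N) ((a <= k) && (g k < c)).

Lemma eq_rk N g h a c : g =1 h -> rk N g a c = rk N h a c.
Proof. by move=> eq_gh; apply: eq_bigr => k _; rewrite eq_gh. Qed.

Lemma rk_id N a c : c <= N -> rk N id a c = c - a.
Proof. by move=> lecN; rewrite /rk sum_ord_range; lia. Qed.

Lemma rk_fixed_from N g a c : fixed_from a g -> rk N g a c = rk N id a c.
Proof. by move=> g_fix; apply: eq_bigr => k _; case: (leqP a k) => //= /g_fix ->. Qed.

Lemma rk_ge N g a c : perm_below N g -> c <= N -> c - a <= rk N g a c.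
Proof.
move=> gN lecN.
have split_a : \sum_(k < N) (g k < c) =
    rk N g a c + \sum_(k < N) ((k < a) && (g k < c)).
  by rewrite /rk -big_split; apply: eq_bigr => k _; case: (leqP a k); case: (g k < c).
have : \sum_(k < N) ((k < a) && (g k < c)) <= \sum_(k < N) (k < a).
  by apply: leq_sum => k _; case: (k < a); case: (g k < c).
rewrite (sum_ord_perm (fun k => k < c) gN) sum_ord_ltn in split_a.
by rewrite sum_ord_ltn; lia.
Qed.

Lemma rk_lipl N g a b c : rk N g a c <= (b - a) + rk N g b c.
Proof.
have : rk N g a c <= \sum_(k < N) ((a <= k) && (k < b)) + rk N g b c.
  rewrite /rk -big_split; apply: leq_sum => k _.
  by case: (leqP a k); case: (leqP b k); case: (g k < c) => //=; lia.
by rewrite sum_ord_range; lia.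
Qed.

Lemma rk_lipr N g a b c : perm_below N g -> rk N g a c <= rk N g a b + (c - b).
Proof.
move=> gN.
have : rk N g a c <= rk N g a b + \sum_(k < N) ((b <= g k) && (g k < c)).
  rewrite /rk -big_split; apply: leq_sum => k _.
  by case: (leqP a k); case: (leqP b (g k)); case: (ltnP (g k) c) => //=; lia.
by rewrite (sum_ord_perm (fun k => (b <= k) && (k < c)) gN) sum_ord_range; lia.
Qed.

Lemma rkS N g a c : a < N -> rk N g a c = (g a < c) + rk N g a.+1 c.
Proof.
move=> ltaN; rewrite -(sum_ord_eq (fun k => g k < c) ltaN) /rk -big_split.
by apply: eq_bigr => k _; case: (g k < c); rewrite ?andbT ?andbF //=; lia.
Qed.

Lemma rk_inj N g h : perm_below N g -> perm_below N h ->
  (forall a c, a <= N -> c <= N -> rk N g a c = rk N h a c) -> g =1 h.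
Proof.
move=> gN hN eq_rk_gh k.
have [ltkN|leNk] := ltnP k N; last by rewrite (proj2 gN) // (proj2 hN).
have ltn_gh c : c <= N -> (g k < c) = (h k < c).
  move=> lecN; have := eq_rk_gh k c (ltnW ltkN) lecN.
  by rewrite !(rkS _ _ ltkN) eq_rk_gh //; lia.
have := ltn_gh (g k).+1 (perm_below_lt gN ltkN).
have := ltn_gh (h k).+1 (perm_below_lt hN ltkN).
by rewrite !ltnS leqnn; lia.
Qed.

Lemma rk_widen N M g a c : fixed_from M g -> M <= N -> a <= M -> c <= M ->
  rk N g a c = rk M g a c.
Proof.
move=> g_fix + leaM lecM; elim: N => [|N IH] leMN; first by have -> : M = 0 by lia.
have [ltMN|leSNM] := ltnP M N.+1; last by have -> : M = N.+1 by lia.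
rewrite /rk big_ord_recr /= -/(rk N g a c) IH; last by lia.
rewrite (g_fix N); last by lia.
by rewrite (_ : N < c = false) ?andbF ?addn0 //; lia.
Qed.

Lemma rk_eq_fixed N g k : perm_below N g -> k < N ->
  (forall c, c <= N -> rk N g k c = c - k) ->
  (forall c, c <= N -> rk N g k.+1 c = c - k.+1) -> g k = k.
Proof.
move=> gN ltkN rk_k rk_Sk.
have ltn_gk c : c <= N -> (g k < c) + (c - k.+1) = c - k.
  by move=> lecN; rewrite -rk_Sk // -rkS // rk_k.
have := ltn_gk k.+1 ltkN; have := ltn_gk (g k).+1 (perm_below_lt gN ltkN).
by rewrite ltnSn /=; case: ltnP => //; lia.
Qed.

Fixpoint minplus_rec (X Y : nat -> nat -> nat) a c n :=
  if n is n'.+1 then minn (minplus_rec X Y a c n') (X a n + Y n c)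
  else X a 0 + Y 0 c.

Definition minplus N X Y a c := minplus_rec X Y a c N.

Section MinPlus.
Variable N : nat.
Implicit Types X Y Z : nat -> nat -> nat.

Lemma minplus_le X Y a c b : b <= N -> minplus N X Y a c <= X a b + Y b c.
Proof.
rewrite /minplus; elim: N => [|n IH] /=; first by rewrite leqn0 => /eqP ->.
by rewrite leq_eqVlt => /orP [/eqP ->|/IH]; lia.
Qed.

Lemma minplus_exists X Y a c :
  exists2 b, b <= N & minplus N X Y a c = X a b + Y b c.
Proof.
rewrite /minplus; elim: N => [|n [b lebn IH]] /=; first by exists 0.
rewrite IH; by case: (leqP (X a b + Y b c) (X a n.+1 + Y n.+1 c)) => _;
  [exists b | exists n.+1]; lia.
Qed.

Lemma minplus_eq X Y a c m : (forall b, b <= N -> m <= X a b + Y b c) ->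
  (exists2 b, b <= N & m = X a b + Y b c) -> minplus N X Y a c = m.
Proof.
move=> le_m [b lebN eq_m]; have [b' leb'N eq_mp] := minplus_exists X Y a c.
by have := le_m b' leb'N; have := minplus_le X Y a c lebN; lia.
Qed.

Lemma eq_minplus X X' Y Y' a c :
  (forall b, b <= N -> X a b = X' a b) -> (forall b, b <= N -> Y b c = Y' b c) ->
  minplus N X Y a c = minplus N X' Y' a c.
Proof.
move=> eqX eqY; apply: minplus_eq => [b lebN|].
  by rewrite eqX ?eqY //; apply: minplus_le.
by have [b lebN ->] := minplus_exists X' Y' a c; exists b; rewrite ?eqX ?eqY.
Qed.

Lemma le_minplus X X' Y Y' a c :
  (forall b, b <= N -> X a b <= X' a b) -> (forall b, b <= N -> Y b c <= Y' b c) ->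
  minplus N X Y a c <= minplus N X' Y' a c.
Proof.
move=> leX leY; have [b lebN ->] := minplus_exists X' Y' a c.
by have := minplus_le X Y a c lebN; have := leX b lebN; have := leY b lebN; lia.
Qed.

Lemma minplusA X Y Z a c :
  minplus N (minplus N X Y) Z a c = minplus N X (minplus N Y Z) a c.
Proof.
have [b1 leb1 eq1] := minplus_exists (minplus N X Y) Z a c.
have [d1 led1 eq2] := minplus_exists X Y a b1.
have [d2 led2 eq3] := minplus_exists X (minplus N Y Z) a c.
have [b2 leb2 eq4] := minplus_exists Y Z d2 c.
have := minplus_le X (minplus N Y Z) a c led1.
have := minplus_le Y Z d1 c leb1.
have := minplus_le (minplus N X Y) Z a c leb2.
have := minplus_le X Y a b2 led2.
lia.
Qed.

Lemma minplus_idl Y a c : a <= N ->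
  (forall b, b <= N -> Y a c <= (b - a) + Y b c) ->
  minplus N (rk N id) Y a c = Y a c.
Proof.
move=> leaN leY; apply: minplus_eq => [b lebN|]; first by rewrite rk_id //; apply: leY.
by exists a; rewrite ?rk_id ?subnn.
Qed.

Lemma minplus_idr X a c : c <= N ->
  (forall b, b <= N -> X a c <= X a b + (c - b)) ->
  minplus N X (rk N id) a c = X a c.
Proof.
move=> lecN leX; apply: minplus_eq => [b lebN|]; first by rewrite rk_id //; apply: leX.
by exists c; rewrite ?rk_id ?subnn ?addn0.
Qed.

End MinPlus.

(** * Demazure steps *)

Definition demstep (g : nat -> nat) i : nat -> nat :=
  if g i < g i.+1 then g \o s_ i else g.

Lemma eq_demstep g h i : g =1 h -> demstep g i =1 demstep h i.
Proof. by move=> eq_gh k; rewrite /demstep !eq_gh; case: ifP => _ /=; rewrite eq_gh. Qed.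

Lemma perm_below_demstep N g i :
  i.+2 <= N -> perm_below N g -> perm_below N (demstep g i).
Proof.
move=> ltiN gN; rewrite /demstep; case: ifP => // _.
by apply: perm_below_comp => //; apply: perm_below_s.
Qed.

Lemma rk_comp_s N g i a c : i.+2 <= N -> a != i.+1 ->
  rk N (g \o s_ i) a c = rk N g a c.
Proof.
move=> ltiN /eqP neq_a.
rewrite /rk -(sum_ord_perm (fun k => (a <= k) && (g k < c)) (perm_below_s ltiN)).
apply: eq_bigr => k _ /=; congr (_ && _); rewrite -{2}(s_K i k).
by rewrite /s_; do ! (case: eqP => /=); lia.
Qed.

Lemma rk_s N i a c : i.+2 <= N -> a != i.+1 -> c <= N -> rk N (s_ i) a c = c - a.
Proof. by move=> ltiN neq_a lecN; rewrite (@rk_comp_s N id) // rk_id. Qed.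

Lemma rk_s_succ N i c : i.+2 <= N -> c <= N -> rk N (s_ i) i.+1 c = (i < c) + (c - i.+2).
Proof.
move=> ltiN lecN; rewrite rkS // (@rk_comp_s N id) ?rk_id //; last by lia.
by rewrite /s_ eqxx; case: eqP => //; lia.
Qed.

Lemma rk_demstep_succ N g i c : i.+2 <= N ->
  rk N (demstep g i) i.+1 c = ((g i < c) || (g i.+1 < c)) + rk N g i.+2 c.
Proof.
move=> ltiN; rewrite /demstep; case: ifP => lt_gi.
  rewrite rkS // rk_comp_s //; last by lia.
  by rewrite /= /s_ eqxx; case: eqP; lia.
by rewrite rkS //; lia.
Qed.

Lemma rk_demstep N g i a c : perm_below N g -> i.+2 <= N -> a <= N -> c <= N ->
  rk N (demstep g i) a c = minplus N (rk N (s_ i)) (rk N g) a c.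
Proof.
move=> gN ltiN leaN lecN.
have [->|neq_a] := eqVneq a i.+1; last first.
  have -> : rk N (demstep g i) a c = rk N g a c.
    by rewrite /demstep; case: ifP => // _; rewrite rk_comp_s.
  apply/esym/minplus_eq => [b lebN|]; first by rewrite rk_s //; apply: rk_lipl.
  by exists a; rewrite ?rk_s ?subnn.
have rk_i : rk N g i c = (g i < c) + ((g i.+1 < c) + rk N g i.+2 c).
  by rewrite (@rkS N g i c) 1?(@rkS N g i.+1 c); lia.
rewrite rk_demstep_succ //; apply/esym/minplus_eq => [b lebN|].
  rewrite rk_s_succ //; case: (leqP b i) => lebi.
    by have := rk_lipl N g i b c; lia.
  by have := rk_lipl N g i.+2 b c; lia.
case: (boolP ((g i < c) || (g i.+1 < c))) => lt_c.
  by exists i.+2; rewrite ?rk_s_succ //; lia.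
by exists i; rewrite ?rk_s_succ //; lia.
Qed.

Lemma eq_invs N g h : g =1 h -> invs N g = invs N h.
Proof. by move=> eq_gh; apply: eq_bigr => p _; apply: eq_bigr => q _; rewrite !eq_gh. Qed.

Lemma invs_id N : invs N id = 0.
Proof.
apply: big1 => p _; apply: big1 => q _ /=.
by case: ltngtP => //= lt_pq; rewrite ltnNge ltnW.
Qed.

Lemma sum_ord2_eq N i j (P : nat -> nat -> bool) : i < N -> j < N ->
  \sum_(p < N) \sum_(q < N) ((p == i :> nat) && ((q == j :> nat) && P p q)) = P i j.
Proof.
move=> ltiN ltjN; rewrite -(sum_ord_eq (fun p => P p j) ltiN).
apply: eq_bigr => p _; have [->|neq_pi] := eqVneq (p : nat) i.
  exact: (sum_ord_eq (P i)).
exact: big1.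
Qed.

Lemma ltn_s i p q :
  (s_ i p < s_ i q) + ((p == i) && (q == i.+1)) = (p < q) + ((p == i.+1) && (q == i)).
Proof. by rewrite /s_; do ! (case: eqP => /=); lia. Qed.

Lemma invs_comp_s N g i : perm_below N g -> i.+2 <= N ->
  invs N (g \o s_ i) + (g i.+1 < g i) = invs N g + (g i < g i.+1).
Proof.
move=> gN ltiN; have sN := perm_below_s ltiN.
pose H p q := (s_ i p < s_ i q) && (g q < g p).
have -> : invs N (g \o s_ i) = \sum_(p < N) \sum_(q < N) H p q.
  rewrite /invs -(sum_ord_perm (fun p => \sum_(q < N) H p q) sN).
  apply: eq_bigr => p _; rewrite -(sum_ord_perm (H (s_ i p)) sN).
  by apply: eq_bigr => q _; rewrite /H !s_K.
rewrite -(sum_ord2_eq (fun p q => g q < g p) (ltnW ltiN) ltiN).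
rewrite -(sum_ord2_eq (fun p q => g q < g p) ltiN (ltnW ltiN)).
rewrite /invs -!big_split /=; apply: eq_bigr => p _.
rewrite -!big_split /=; apply: eq_bigr => q _.
by rewrite /H; have := ltn_s i p q; case: (g q < g p); rewrite ?andbT ?andbF //=; lia.
Qed.

Lemma ltn_invs_comp_s N g i : perm_below N g -> i.+2 <= N ->
  (invs N g < invs N (g \o s_ i)) = (g i < g i.+1).
Proof.
move=> gN ltiN; have := invs_comp_s gN ltiN.
have : g i != g i.+1 by apply/eqP => /(proj1 gN); lia.
by case: ltngtP; lia.
Qed.

Lemma invs_demstep N g i : perm_below N g -> i.+2 <= N ->
  invs N (demstep g i) <= (invs N g).+1.
Proof.
move=> gN ltiN; rewrite /demstep; case: ifP => // _.
by have := invs_comp_s gN ltiN; lia.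
Qed.

Lemma invs_widen N M g : perm_below M g -> M <= N -> invs N g = invs M g.
Proof.
move=> gM; elim: N => [|N IH] leMN; first by have -> : M = 0 by lia.
have [ltMN|leSNM] := ltnP M N.+1; last by have -> : M = N.+1 by lia.
rewrite -IH; last by lia.
rewrite /invs big_ord_recr /= [X in _ + X]big1 ?addn0; last first.
  by move=> j _; have := ltn_ord j; case: (ltnP N j) => //=; lia.
apply: eq_bigr => p _; rewrite big_ord_recr /= (proj2 gM N); last by lia.
suff -> : (p < N) && (N < g p) = false by rewrite addn0.
have [ltpM|leMp] := ltnP p M; first by have := perm_below_lt gM ltpM; lia.
by rewrite (proj2 gM p) //; lia.
Qed.

Lemma inversion_le_invs N g p q : p < N -> q < N ->
  (p < q) && (g q < g p) <= invs N g.
Proof.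
move=> ltpN ltqN.
by rewrite /invs (bigD1 (Ordinal ltpN)) //= (bigD1 (Ordinal ltqN)) //=; lia.
Qed.

Lemma invs_gt0_descent N g : perm_below N g -> 0 < invs N g ->
  exists i, i.+2 <= N /\ g i.+1 < g i.
Proof.
move=> gN invs_gt0.
case: (pickP (fun i : 'I_N => (i.+2 <= N) && (g i.+1 < g i))) => [i /andP []|no_desc].
  by exists i.
have incr : {in gtn N &, {homo g : i j / i < j}}.
  apply: homo_ltn_in => [y x z|i j _ ltjN k|i ltiN ltSiN]; first exact: ltn_trans.
    by rewrite inE => /andP [_ ltkj]; apply: ltn_trans ltkj ltjN.
  have /= := no_desc (Ordinal ltiN); rewrite inE in ltSiN.
  rewrite ltSiN /= ltnNge => /negbFE; rewrite leq_eqVlt => /orP [/eqP /(proj1 gN)|//].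
  lia.
move: invs_gt0; rewrite /invs big1 // => p _; apply: big1 => q _.
by case: ltnP => //= lt_pq; rewrite ltnNge ltnW // incr ?inE.
Qed.

Lemma perm_below_incr_id N g : perm_below N g ->
  (forall i, i.+2 <= N -> g i < g i.+1) -> g =1 id.
Proof.
move=> gN incr.
have incr_d k d : k + d < N -> g k + d <= g (k + d).
  elim: d => [|d IH] ltN; first by rewrite !addn0.
  by have := IH ltac:(lia); have := incr (k + d) ltac:(lia); rewrite !addnS; lia.
move=> k; have [ltkN|leNk] := ltnP k N; last by rewrite (proj2 gN).
have ltN1N : N.-1 < N by lia.
have := incr_d 0 k ltkN; have := incr_d k (N.-1 - k) ltac:(lia).
rewrite add0n (_ : k + (N.-1 - k) = N.-1); last by lia.
by have := perm_below_lt gN ltN1N; lia.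
Qed.

Lemma invs_eq0 N g : perm_below N g -> invs N g = 0 -> g =1 id.
Proof.
move=> gN invs0; apply: (perm_below_incr_id gN) => i ltiN.
have := inversion_le_invs g (ltnW ltiN) ltiN.
rewrite invs0 ltnSn leqn0 eqb0 -leqNgt leq_eqVlt => /orP [/eqP /(proj1 gN)|//].
lia.
Qed.

Definition letters_below N (a : seq nat) := all (fun i => i.+2 <= N) a.

Definition demazure (a : seq nat) := foldl demstep id a.

Lemma letters_below_rcons N a i :
  letters_below N (rcons a i) = letters_below N a && (i.+2 <= N).
Proof. by rewrite /letters_below all_rcons andbC. Qed.

Lemma letters_below_cat N a b :
  letters_below N (a ++ b) = letters_below N a && letters_below N b.
Proof. exact: all_cat. Qed.

Lemma letters_below_max N a : (foldr maxn 0 a).+2 <= N -> letters_below N a.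
Proof.
elim: a => [|j a IH] //= leN; apply/andP; split; first by lia.
by apply: IH; lia.
Qed.

Lemma evalw_rcons a i : evalw (rcons a i) = evalw a \o s_ i.
Proof. by rewrite /evalw foldl_rcons. Qed.

Lemma demazure_rcons a i : demazure (rcons a i) = demstep (demazure a) i.
Proof. by rewrite /demazure foldl_rcons. Qed.

Lemma perm_below_evalw N a : letters_below N a -> perm_below N (evalw a).
Proof.
elim/last_ind: a => [|a i IH]; first by move=> _; apply: perm_below_id.
rewrite letters_below_rcons evalw_rcons => /andP [aN ltiN].
by apply: perm_below_comp; [apply: IH | apply: perm_below_s].
Qed.

Lemma perm_below_demazure N a : letters_below N a -> perm_below N (demazure a).
Proof.
elim/last_ind: a => [|a i IH]; first by move=> _; apply: perm_below_id.
rewrite letters_below_rcons demazure_rcons => /andP [aN ltiN].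
by apply: perm_below_demstep => //; apply: IH.
Qed.

Lemma dem_demazure a : dem a =1 demazure a.
Proof.
rewrite /dem /demazure; set N := (foldr maxn 0 a).+2.
have : letters_below N a by apply: letters_below_max.
clearbody N; set step := fun g i => if invs N g < invs N (g \o s_ i) then _ else _.
suff eq_foldl g h : perm_below N g -> g =1 h -> letters_below N a ->
    foldl step g a =1 foldl demstep h a.
  by apply: eq_foldl => //; apply: perm_below_id.
elim: a g h => [|i a IH] g h //= gN eq_gh /andP [ltiN aN].
apply: IH => //; last by rewrite /step ltn_invs_comp_s //; apply: eq_demstep.
by rewrite /step; case: ifP => // _; apply/perm_below_comp/perm_below_s.
Qed.

Lemma invs_demazure N a : letters_below N a -> invs N (demazure a) <= size a.
Proof.
elim/last_ind: a => [|a i IH]; first by rewrite /demazure /= invs_id.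
rewrite letters_below_rcons demazure_rcons size_rcons => /andP [aN ltiN].
by have := invs_demstep (perm_below_demazure aN) ltiN; have := IH aN; lia.
Qed.

Lemma invs_evalw N a : letters_below N a -> invs N (evalw a) <= size a.
Proof.
elim/last_ind: a => [|a i IH]; first by rewrite /evalw /= invs_id.
rewrite letters_below_rcons evalw_rcons size_rcons => /andP [aN ltiN].
by have := invs_comp_s (perm_below_evalw aN) ltiN; have := IH aN; lia.
Qed.

Lemma demazure_reduced N a : letters_below N a -> invs N (evalw a) = size a ->
  demazure a =1 evalw a.
Proof.
elim/last_ind: a => [|a i IH]; first by [].
rewrite letters_below_rcons evalw_rcons size_rcons => /andP [aN ltiN] reduced.
have := invs_evalw aN; have := invs_comp_s (perm_below_evalw aN) ltiN.
rewrite reduced => swap le_a.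
have asc : evalw a i < evalw a i.+1 by move: swap; case: ltngtP => //; lia.
rewrite demazure_rcons => k.
rewrite (eq_demstep i (IH aN _)); last by lia.
by rewrite /demstep asc.
Qed.

Lemma rk_demazure_cat N a b x c : letters_below N (a ++ b) -> x <= N -> c <= N ->
  rk N (demazure (a ++ b)) x c = minplus N (rk N (demazure b)) (rk N (demazure a)) x c.
Proof.
rewrite letters_below_cat => /andP [aN].
elim/last_ind: b x c => [|b i IH] x c.
  by move=> _ lexN lecN; rewrite cats0 minplus_idl // => k lekN; apply: rk_lipl.
rewrite letters_below_rcons => /andP [bN ltiN] lexN lecN.
have abN : letters_below N (a ++ b) by rewrite letters_below_cat aN.
rewrite -rcons_cat !demazure_rcons rk_demstep //; last exact: perm_below_demazure.
rewrite (@eq_minplus N _ (rk N (s_ i)) _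
  (minplus N (rk N (demazure b)) (rk N (demazure a)))) //; last by move=> k lekN; apply: IH.
rewrite -minplusA; apply: eq_minplus => // k lekN.
by rewrite rk_demstep //; apply: perm_below_demazure.
Qed.

Lemma exists_reduced_word N g : perm_below N g ->
  exists a, [/\ letters_below N a, evalw a =1 g & size a = invs N g].
Proof.
move=> gN; have [n] := ubnP (invs N g); elim: n g gN => // n IH g gN.
have [invs0 _|invs_gt0 le_n] := posnP (invs N g).
  by exists [::]; split; rewrite ?invs0 // => k; rewrite (invs_eq0 gN invs0).
have [i [ltiN desc]] := invs_gt0_descent gN invs_gt0.
have gsN := perm_below_comp gN (perm_below_s ltiN).
have := invs_comp_s gN ltiN; rewrite desc (_ : g i < g i.+1 = false); last by lia.
move=> invs_gs; have [a [aN eval_a size_a]] := IH (g \o s_ i) gsN ltac:(lia).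
exists (rcons a i); split.
- by rewrite letters_below_rcons aN.
- by move=> k; rewrite evalw_rcons /= eval_a /= s_K.
- by rewrite size_rcons size_a; lia.
Qed.

Notation sz x := (size (sinf_val x)).

Lemma sinf_perm_eq x : perm_eq (sinf_val x) (iota 0 (sz x)).
Proof. by case: x => s /= /andP []. Qed.

Lemma app_last x : 0 < sz x -> app x (sz x).-1 != (sz x).-1.
Proof.
move=> sz_gt0; case/andP: (sinf_canon x) => _ /orP [/eqP sx0|].
  by rewrite sx0 in sz_gt0.
by rewrite /app (set_nth_default 0) ?nth_last //; lia.
Qed.

Lemma fixed_from_app x : fixed_from (sz x) (app x).
Proof. by move=> k leszk; rewrite /app nth_default. Qed.

Lemma app_lt x k : k < sz x -> app x k < sz x.
Proof.
move=> ltk; have : app x k \in iota 0 (sz x).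
  by rewrite -(perm_mem (sinf_perm_eq x)) /app mem_nth.
by rewrite mem_iota.
Qed.

Lemma perm_below_app x : perm_below (sz x) (app x).
Proof.
split; last exact: fixed_from_app.
have x_uniq : uniq (sinf_val x) by rewrite (perm_uniq (sinf_perm_eq x)) iota_uniq.
move=> j k; have fix_x := @fixed_from_app x.
case: (ltnP j (sz x)) => ltj; case: (ltnP k (sz x)) => ltk.
- move=> eq_jk; apply/eqP; rewrite -(nth_uniq 0 ltj ltk x_uniq).
  by move: eq_jk; rewrite /app !(set_nth_default 0) // => ->.
- by rewrite (fix_x k) // => eq_j; have := app_lt ltj; lia.
- by rewrite (fix_x j) // => eq_k; have := app_lt ltk; lia.
- by rewrite !fix_x.
Qed.

Lemma perm_below_app_widen x N : sz x <= N -> perm_below N (app x).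
Proof. exact: perm_below_widen (perm_below_app x). Qed.

Lemma size_sinf_le x M : fixed_from M (app x) -> sz x <= M.
Proof.
move=> x_fix; rewrite leqNgt; apply/negP => ltM.
have sz_gt0 : 0 < sz x by lia.
by case/negP: (app_last sz_gt0); rewrite x_fix //; lia.
Qed.

Lemma app_inj x y : app x =1 app y -> x = y.
Proof.
move=> eq_xy.
have lexy : sz x <= sz y by apply: size_sinf_le => k lek; rewrite eq_xy fixed_from_app.
have leyx : sz y <= sz x by apply: size_sinf_le => k lek; rewrite -eq_xy fixed_from_app.
apply: val_inj => /=; apply: (@eq_from_nth _ 0) => [|i lti]; first lia.
by have := eq_xy i; rewrite /app !(set_nth_default 0) //; lia.
Qed.

Fixpoint fixed_tail (g : nat -> nat) n :=
  if n is n'.+1 then (if g n' == n' then fixed_tail g n' else n) else 0.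

Lemma fixed_tail_fix g n k : fixed_tail g n <= k -> k < n -> g k = k.
Proof.
elim: n => //= n IH; case: eqP => [g_n|_] le_k ltk; last lia.
by have [->|neq_k] := eqVneq k n; last by apply: IH; lia.
Qed.

Lemma fixed_tail_last g n : 0 < fixed_tail g n ->
  g (fixed_tail g n).-1 != (fixed_tail g n).-1.
Proof. by elim: n => //= n IH; case: eqP => [_|/eqP]. Qed.

Lemma fixed_from_tail N g : perm_below N g -> fixed_from (fixed_tail g N) g.
Proof.
move=> gN k lek; have [ltkN|leNk] := ltnP k N; first exact: fixed_tail_fix lek ltkN.
exact: (proj2 gN).
Qed.

Lemma canon_fixed_tail N g : perm_below N g -> Defs.canon (mkseq g (fixed_tail g N)).
Proof.
move=> gN; set m := fixed_tail g N.
have gm : perm_below m g by split; [exact: (proj1 gN) | exact: fixed_from_tail].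
rewrite /Defs.canon size_mkseq; apply/andP; split.
  have g_uniq : uniq (mkseq g m) by rewrite map_inj_uniq ?iota_uniq //; exact: (proj1 gN).
  have sub_iota : {subset mkseq g m <= iota 0 m}.
    move=> y /mapP [k]; rewrite mem_iota => /andP [_ ltk] ->.
    by rewrite mem_iota /=; apply: perm_below_lt gm ltk.
  have le_size : size (iota 0 m) <= size (mkseq g m) by rewrite size_iota size_mkseq.
  have [_ eq_size] := uniq_min_size g_uniq sub_iota le_size.
  by apply: uniq_perm => //; exact: iota_uniq.
have [->|m_gt0] := posnP m; first by [].
apply/orP; right; rewrite -nth_last size_mkseq nth_mkseq; last by lia.
exact: fixed_tail_last.
Qed.

Definition sinf_of N g (gN : perm_below N g) : sinf := SInf (canon_fixed_tail gN).

Lemma app_sinf_of N g (gN : perm_below N g) : app (sinf_of gN) =1 g.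
Proof.
move=> j; rewrite /app /=; case: (ltnP j (fixed_tail g N)) => ltj.
  by rewrite nth_mkseq.
by rewrite nth_default ?size_mkseq // (fixed_from_tail gN).
Qed.

Lemma ell_invs x N : sz x <= N -> ell x = invs N (app x).
Proof. by move=> lexN; rewrite /ell (invs_widen (perm_below_app x) lexN). Qed.

Lemma exists_reduced_word_sinf x :
  exists a, reduced_word_of a x /\ letters_below (sz x) a.
Proof.
have [a [aN eval_a size_a]] := exists_reduced_word (perm_below_app x).
by exists a.
Qed.

Lemma demazure_reduced_word a u N : reduced_word_of a u -> sz u <= N ->
  letters_below N a -> demazure a =1 app u.
Proof.
move=> [eval_a size_a] leuN aN k; rewrite (demazure_reduced aN) ?eval_a //.
by rewrite (eq_invs _ eval_a) size_a (ell_invs leuN).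
Qed.

(** * The degenerate Hecke product *)

Definition rkw N x := rk N (app x).

Lemma rkw_inj N x y : sz x <= N -> sz y <= N ->
  (forall a c, a <= N -> c <= N -> rkw N x a c = rkw N y a c) -> x = y.
Proof.
move=> lexN leyN eq_rkw; apply: app_inj.
exact: rk_inj (perm_below_app_widen lexN) (perm_below_app_widen leyN) eq_rkw.
Qed.

Lemma hmul_rkw u v w : hmul u v w -> exists N0, forall N, N0 <= N ->
  [/\ sz u <= N, sz v <= N, sz w <= N &
   forall a c, a <= N -> c <= N -> rkw N w a c = minplus N (rkw N v) (rkw N u) a c].
Proof.
move=> [a [b [red_a [red_b dem_ab]]]].
exists (maxn (foldr maxn 0 (a ++ b)).+2 (maxn (sz u) (maxn (sz v) (sz w)))) => N leN.
have abN : letters_below N (a ++ b) by apply: letters_below_max; lia.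
have := abN; rewrite letters_below_cat => /andP [aN bN].
split; [lia | lia | lia | move=> x c lexN lecN].
rewrite /rkw (eq_rk _ _ _ (fun k => esym (dem_ab k))) (eq_rk _ _ _ (dem_demazure _)).
rewrite rk_demazure_cat //; apply: eq_minplus => k lekN; apply: eq_rk.
  by apply: demazure_reduced_word red_b _ bN; lia.
by apply: demazure_reduced_word red_a _ aN; lia.
Qed.

Lemma ell_hmul u v w : hmul u v w -> ell w <= ell u + ell v.
Proof.
move=> [a [b [[_ size_a] [[_ size_b] dem_ab]]]].
set N := maxn (foldr maxn 0 (a ++ b)).+2 (sz w).
rewrite (@ell_invs w N) ?leq_maxr // -size_a -size_b -size_cat.
rewrite (eq_invs _ (fun k => esym (dem_ab k))) (eq_invs _ (dem_demazure _)).
exact/invs_demazure/letters_below_max/leq_maxl.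
Qed.

Lemma hmul_exists u v : exists w, hmul u v w.
Proof.
have [a [red_a _]] := exists_reduced_word_sinf u.
have [b [red_b _]] := exists_reduced_word_sinf v.
have abN : perm_below (foldr maxn 0 (a ++ b)).+2 (demazure (a ++ b)).
  exact/perm_below_demazure/letters_below_max.
exists (sinf_of abN), a, b; split => //; split => // j.
by rewrite app_sinf_of dem_demazure.
Qed.

Lemma hmul_fun u v w w' : hmul u v w -> hmul u v w' -> w = w'.
Proof.
move=> /hmul_rkw [N1 rk1] /hmul_rkw [N2 rk2].
have [_ _ lewN rk_w] := rk1 (maxn N1 N2) (leq_maxl _ _).
have [_ _ lew'N rk_w'] := rk2 (maxn N1 N2) (leq_maxr _ _).
by apply: (rkw_inj lewN lew'N) => a c leaN lecN; rewrite rk_w // rk_w'.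
Qed.

Definition hprod u v : sinf := projT1 (cid (hmul_exists u v)).

Lemma hmul_hprod u v : hmul u v (hprod u v).
Proof. exact: projT2 (cid _). Qed.

Lemma hmulE u v w : hmul u v w <-> hprod u v = w.
Proof. by split=> [/(hmul_fun (hmul_hprod u v)) | <-] //; apply: hmul_hprod. Qed.

Lemma ell_hprod u v : ell (hprod u v) <= ell u + ell v.
Proof. exact/ell_hmul/hmul_hprod. Qed.

Lemma hprodA u y v : hprod (hprod u y) v = hprod u (hprod y v).
Proof.
have [N1 rk1] := hmul_rkw (hmul_hprod u y).
have [N2 rk2] := hmul_rkw (hmul_hprod (hprod u y) v).
have [N3 rk3] := hmul_rkw (hmul_hprod y v).
have [N4 rk4] := hmul_rkw (hmul_hprod u (hprod y v)).
set N := maxn (maxn N1 N2) (maxn N3 N4).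
have [_ _ _ rk_uy] := rk1 N ltac:(lia).
have [_ _ lewN rk_uyv] := rk2 N ltac:(lia).
have [_ _ _ rk_yv] := rk3 N ltac:(lia).
have [_ _ lew'N rk_uyv'] := rk4 N ltac:(lia).
apply: (rkw_inj lewN lew'N) => a c leaN lecN; rewrite rk_uyv // rk_uyv' //.
transitivity (minplus N (rkw N v) (minplus N (rkw N y) (rkw N u)) a c).
  by apply: eq_minplus => // b lebN; rewrite rk_uy.
by rewrite -minplusA; apply: eq_minplus => // b lebN; rewrite rk_yv.
Qed.

Lemma ell_id : ell sinf_id = 0.
Proof. by rewrite /ell /invs big_ord0. Qed.

Lemma reduced_word_nil : reduced_word_of [::] sinf_id.
Proof. by split; [move=> j; rewrite /app /= nth_nil | rewrite ell_id]. Qed.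

Lemma hprod_idl v : hprod sinf_id v = v.
Proof.
apply/hmulE; have [b [red_b bN]] := exists_reduced_word_sinf v.
exists [::], b; split; first exact: reduced_word_nil.
split => // j; rewrite dem_demazure cat0s.
exact: demazure_reduced_word red_b (leqnn _) bN j.
Qed.

Lemma hprod_idr u : hprod u sinf_id = u.
Proof.
apply/hmulE; have [a [red_a aN]] := exists_reduced_word_sinf u.
exists a, [::]; split => //; split; first exact: reduced_word_nil.
move=> j; rewrite cats0 dem_demazure.
exact: demazure_reduced_word red_a (leqnn _) aN j.
Qed.

(** * Comparing a product with its factors *)

Lemma rkw_hprod_ge u v : exists N0, forall N, N0 <= N ->
  [/\ sz u <= N, sz v <= N, sz (hprod u v) <= N &
   forall a c, a <= N -> c <= N ->
     rkw N u a c <= rkw N (hprod u v) a c /\ rkw N v a c <= rkw N (hprod u v) a c].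
Proof.
have [N0 rk0] := hmul_rkw (hmul_hprod u v); exists N0 => N leN.
have [leuN levN lewN rk_w] := rk0 N leN; split => // a c leaN lecN.
have uN := perm_below_app_widen leuN; have vN := perm_below_app_widen levN.
rewrite rk_w //; split.
  rewrite -[X in X <= _](@minplus_idl N (rkw N u)) //; last by move=> b _; apply: rk_lipl.
  by apply: le_minplus => // b lebN; rewrite rk_id //; apply: rk_ge.
rewrite -[X in X <= _](@minplus_idr N (rkw N v)) //; last by move=> b _; apply: rk_lipr.
by apply: le_minplus => // b lebN; rewrite rk_id //; apply: rk_ge.
Qed.

Lemma size_le_of_rkw_le N x w : sz x <= N -> sz w <= N ->
  (forall a c, a <= N -> c <= N -> rkw N x a c <= rkw N w a c) -> sz x <= sz w.
Proof.
move=> lexN lewN le_rkw; apply: size_sinf_le => k lek.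
have [ltkN|leNk] := ltnP k N; last by apply: fixed_from_app; lia.
have rkw_x j c : sz w <= j -> j <= N -> c <= N -> rkw N x j c = c - j.
  move=> lej lejN lecN.
  have rkw_w : rkw N w j c = c - j.
    by rewrite /rkw rk_fixed_from ?rk_id // => i lei; apply: fixed_from_app; lia.
  have := le_rkw j c lejN lecN; have := rk_ge j (perm_below_app_widen lexN) lecN.
  by rewrite rkw_w /rkw; lia.
by apply: (rk_eq_fixed (perm_below_app_widen lexN) ltkN) => c lecN; apply: rkw_x; lia.
Qed.

Lemma size_hprod u v : sz u <= sz (hprod u v) /\ sz v <= sz (hprod u v).
Proof.
have [N0 rk0] := rkw_hprod_ge u v; have [leuN levN lewN le_rkw] := rk0 N0 (leqnn _).
split; [apply: (size_le_of_rkw_le leuN lewN) | apply: (size_le_of_rkw_le levN lewN)];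
  by move=> a c leaN lecN; case: (le_rkw a c leaN lecN).
Qed.

Lemma rkw_hprodr_le u v N a c : sz (hprod u v) <= N -> a <= N -> c <= N ->
  rkw N v a c <= rkw N (hprod u v) a c.
Proof.
move=> lewN leaN lecN; have [N0 rk0] := rkw_hprod_ge u v.
have [_ _ _ le_rkw] := rk0 (maxn N0 N) (leq_maxl _ _).
have [_ le_rkw_v] :=
  le_rkw a c (leq_trans leaN (leq_maxr _ _)) (leq_trans lecN (leq_maxr _ _)).
have [_ levw] := size_hprod u v; have levN := leq_trans levw lewN.
have fix_N x : sz x <= N -> fixed_from N (app x).
  by move=> lexN k lek; apply: fixed_from_app; lia.
by rewrite /rkw -!(@rk_widen (maxn N0 N) N) ?leq_maxr //; apply: fix_N.
Qed.

Lemma ltn_sum (I : finType) (F G : I -> nat) j :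
  (forall i, F i <= G i) -> F j < G j -> \sum_i F i < \sum_i G i.
Proof.
move=> leFG ltj; rewrite (bigD1 j) // [X in _ < X](bigD1 j) //=.
by rewrite -addSn leq_add // leq_sum.
Qed.

Definition rkw_sum N x := \sum_(a < N.+1) \sum_(c < N.+1) rkw N x a c.

Lemma rkw_sum_hprod_lt u v N : hprod u v != v -> sz (hprod u v) <= N ->
  rkw_sum N v < rkw_sum N (hprod u v).
Proof.
move=> neq_wv lewN; set w := hprod u v.
have le_rkw (a c : 'I_N.+1) : rkw N v a c <= rkw N w a c.
  by apply: rkw_hprodr_le; rewrite // -ltnS.
case: (boolP [exists a : 'I_N.+1, [exists c : 'I_N.+1, rkw N v a c != rkw N w a c]]).
  move=> /existsP [a /existsP [c neq_ac]].
  apply: (@ltn_sum _ _ _ a) => [a'|]; first exact: leq_sum.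
  apply: (@ltn_sum _ _ _ c) => //.
  by rewrite ltn_neqAle neq_ac le_rkw.
move=> /existsPn same; case/eqP: neq_wv; apply: (rkw_inj lewN).
  by have [_ levw] := size_hprod u v; apply: leq_trans levw lewN.
move=> a c leaN lecN.
have /existsPn /(_ (Ordinal (lecN : c < N.+1))) := same (Ordinal (leaN : a < N.+1)).
by rewrite negbK => /eqP.
Qed.

Lemma hprod_ind (P : sinf -> Prop) :
  (forall w, (forall u v, v != w -> hprod u v = w -> P v) -> P w) -> forall w, P w.
Proof.
move=> IH w.
suff gen N n x : sz x <= N -> rkw_sum N x < n -> P x.
  exact: (gen (sz w) (rkw_sum (sz w) w).+1).
elim: n x => // n IHn x lexN ltn; apply: IH => u v neq_vx eq_x.
have [_ levx] := size_hprod u v; rewrite eq_x in levx.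
apply: IHn; first exact: leq_trans levx lexN.
have := @rkw_sum_hprod_lt u v N; rewrite eq_x eq_sym => /(_ neq_vx lexN); lia.
Qed.

(** * The convolution ring [R(S_infinity)] *)

Definition allsinf n : seq sinf :=
  undup (pmap insub (flatten [seq permutations (iota 0 k) | k <- iota 0 n.+1])).

Lemma allsinf_uniq n : uniq (allsinf n).
Proof. exact: undup_uniq. Qed.

Lemma mem_allsinf x n : sz x <= n -> x \in allsinf n.
Proof.
move=> lexn; rewrite mem_undup mem_pmap_sub; apply/flatten_mapP.
by exists (sz x); rewrite ?mem_iota ?mem_permutations ?sinf_perm_eq //; lia.
Qed.

Local Open Scope ring_scope.
Local Open Scope classical_set_scope.

Lemma sum_rot3 (R : nmodType) (I : Type) (r : seq I) (F : I -> I -> I -> R) :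
  \sum_(a <- r) \sum_(b <- r) \sum_(c <- r) F a b c =
  \sum_(b <- r) \sum_(c <- r) \sum_(a <- r) F a b c.
Proof. by rewrite exchange_big; apply: eq_bigr => b _; rewrite exchange_big. Qed.

Section Convolution.
Variable R : comPzRingType.
Implicit Types (f g h : sinf -> R) (u v w x y z : sinf).

Definition hcoef u v w : R :=
  if hprod u v == w then (-1) ^+ (ell u + ell v - ell w) else 0.

Lemma hcoef_eq0 u v w : hprod u v != w -> hcoef u v w = 0.
Proof. by rewrite /hcoef => /negbTE ->. Qed.

Lemma hstarE f g w n : (sz w <= n)%N ->
  hstar f g w = \sum_(u <- allsinf n) \sum_(v <- allsinf n) hcoef u v w * f u * g v.
Proof.
move=> lewn; rewrite /hstar.
rewrite (eq_fsbigr (fun p => hcoef p.1 p.2 w * f p.1 * g p.2)); last first.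
  by move=> [u v]; rewrite inE => /hmulE /= uvw; rewrite /hcoef uvw eqxx.
rewrite (fsbig_fwiden [seq (u, v) | u <- allsinf n, v <- allsinf n]) ?big_allpairs //.
- move=> [u v] /= /hmulE uvw; have := size_hprod u v; rewrite uvw => -[leu lev].
  by apply/allpairsP; exists (u, v); split => //=; apply: mem_allsinf; lia.
- by apply: allpairs_uniq; rewrite ?allsinf_uniq // => -[a b] [c d] _ _ [-> ->].
- by move=> [u v] [_ /= /hmulE neq]; rewrite /= hcoef_eq0 ?mul0r //; apply/eqP.
Qed.

Lemma fix_sumE f w n : (sz w <= n)%N ->
  fix_sum f w = \sum_(u <- allsinf n) hcoef u w w * f u.
Proof.
move=> lewn; rewrite /fix_sum (eq_fsbigr (fun u => hcoef u w w * f u)); last first.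
  by move=> u; rewrite inE => /hmulE uww; rewrite /hcoef uww eqxx addnK.
rewrite (fsbig_fwiden (allsinf n)) ?allsinf_uniq //.
- move=> u /= /hmulE uww; have [leu _] := size_hprod u w.
  by rewrite mem_allsinf //; move: leu; rewrite uww; lia.
- by move=> u [_ /= /hmulE neq]; rewrite /= hcoef_eq0 ?mul0r //; apply/eqP.
Qed.

Lemma hstar1l f : hstar (hone R) f = f.
Proof.
apply/funext => w; rewrite (hstarE _ _ (leqnn _)).
rewrite (bigD1_seq sinf_id) ?mem_allsinf ?allsinf_uniq //=.
rewrite [X in _ + X]big1 ?addr0; last first.
  by move=> u /negbTE neq; apply: big1 => v _; rewrite /hone neq mulr0 mul0r.
rewrite (bigD1_seq w) ?mem_allsinf ?allsinf_uniq //= big1 ?addr0; last first.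
  by move=> v neq; rewrite hcoef_eq0 ?hprod_idl // !mul0r.
by rewrite /hcoef hprod_idl eqxx ell_id add0n subnn /hone eqxx !mul1r.
Qed.

Lemma hstarr1 f : hstar f (hone R) = f.
Proof.
apply/funext => w; rewrite (hstarE _ _ (leqnn _)).
rewrite (bigD1_seq w) ?mem_allsinf ?allsinf_uniq //= [X in _ + X]big1 ?addr0; last first.
  move=> u neq; apply: big1 => v _; rewrite /hone.
  by have [->|_] := eqVneq v sinf_id; rewrite ?mulr0 // hcoef_eq0 ?hprod_idr // !mul0r.
rewrite (bigD1_seq sinf_id) ?mem_allsinf ?allsinf_uniq //= big1 ?addr0; last first.
  by move=> v /negbTE neq; rewrite /hone neq mulr0.
by rewrite /hcoef hprod_idr eqxx ell_id addn0 subnn /hone ?eqxx mulr1 mul1r.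
Qed.

Lemma hcoef_neq0 u v w : hcoef u v w != 0 -> hprod u v = w.
Proof. by rewrite /hcoef; case: ifP => [/eqP -> //|_]; rewrite eqxx. Qed.

Lemma size_hcoefl u v w : hcoef u v w != 0 -> (sz u <= sz w)%N.
Proof. by move=> /hcoef_neq0 <-; case: (size_hprod u v). Qed.

Lemma size_hcoefr u v w : hcoef u v w != 0 -> (sz v <= sz w)%N.
Proof. by move=> /hcoef_neq0 <-; case: (size_hprod u v). Qed.

Lemma mul_hstar f g x n (c : R) : (c != 0 -> (sz x <= n)%N) ->
  c * hstar f g x =
    \sum_(u <- allsinf n) \sum_(y <- allsinf n) c * (hcoef u y x * f u * g y).
Proof.
move=> supp_c; have [->|/supp_c lexn] := eqVneq c 0.
  by rewrite !mul0r big1 // => u _; rewrite big1 // => y _; rewrite mul0r.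
by rewrite (hstarE _ _ lexn) mulr_sumr; under eq_bigr do rewrite mulr_sumr.
Qed.

Lemma sum_hcoef_mul u y n (F : sinf -> R) :
  (forall x, F x != 0 -> (sz x <= n)%N) ->
  \sum_(x <- allsinf n) hcoef u y x * F x = hcoef u y (hprod u y) * F (hprod u y).
Proof.
move=> supp_F; set x0 := hprod u y.
have [F0|/supp_F lex0] := eqVneq (F x0) 0.
  rewrite F0 mulr0 big1 // => x _.
  by have [<-|neq] := eqVneq x0 x; rewrite ?F0 ?mulr0 // hcoef_eq0 ?mul0r.
rewrite (bigD1_seq x0) ?mem_allsinf ?allsinf_uniq //= big1 ?addr0 // => x neq.
by rewrite hcoef_eq0 ?mul0r // eq_sym.
Qed.

Definition hcoef3 u y v w : R :=
  if hprod (hprod u y) v == w then (-1) ^+ (ell u + ell y + ell v - ell w) else 0.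

Lemma sum_hcoefl u y v w :
  \sum_(x <- allsinf (sz w)) hcoef u y x * hcoef x v w = hcoef3 u y v w.
Proof.
rewrite sum_hcoef_mul => [|x]; last exact: size_hcoefl.
rewrite /hcoef3 /hcoef eqxx; case: eqP => [eq_w|]; last by rewrite mulr0.
rewrite -exprD; congr (_ ^+ _).
by have := ell_hprod u y; have := ell_hprod (hprod u y) v; rewrite eq_w; lia.
Qed.

Lemma sum_hcoefr u y v w :
  \sum_(z <- allsinf (sz w)) hcoef y v z * hcoef u z w = hcoef3 u y v w.
Proof.
rewrite sum_hcoef_mul => [|z]; last exact: size_hcoefr.
rewrite /hcoef3 hprodA /hcoef eqxx; case: eqP => [eq_w|]; last by rewrite mulr0.
rewrite -exprD; congr (_ ^+ _).
by have := ell_hprod y v; have := ell_hprod u (hprod y v); rewrite eq_w; lia.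
Qed.

Lemma hstar_hstarl f g h w : hstar (hstar f g) h w =
  \sum_(u <- allsinf (sz w)) \sum_(y <- allsinf (sz w)) \sum_(v <- allsinf (sz w))
    hcoef3 u y v w * (f u * g y * h v).
Proof.
set L := allsinf (sz w); rewrite (hstarE _ _ (leqnn _)).
transitivity (\sum_(x <- L) \sum_(v <- L) \sum_(u <- L) \sum_(y <- L)
    hcoef u y x * hcoef x v w * (f u * g y * h v)).
  apply: eq_bigr => x _; apply: eq_bigr => v _.
  rewrite (mul_hstar _ _ (@size_hcoefl x v w)) big_distrl /=.
  by apply: eq_bigr => u _; rewrite big_distrl; apply: eq_bigr => y _ /=; ring.
under eq_bigr do rewrite sum_rot3.
rewrite sum_rot3; apply: eq_bigr => u _; apply: eq_bigr => y _.
rewrite exchange_big; apply: eq_bigr => v _.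
by rewrite -big_distrl /= sum_hcoefl.
Qed.

Lemma hstar_hstarr f g h w : hstar f (hstar g h) w =
  \sum_(u <- allsinf (sz w)) \sum_(y <- allsinf (sz w)) \sum_(v <- allsinf (sz w))
    hcoef3 u y v w * (f u * g y * h v).
Proof.
set L := allsinf (sz w); rewrite (hstarE _ _ (leqnn _)).
transitivity (\sum_(u <- L) \sum_(z <- L) \sum_(y <- L) \sum_(v <- L)
    hcoef y v z * hcoef u z w * (f u * g y * h v)).
  apply: eq_bigr => u _; apply: eq_bigr => z _.
  rewrite -mulrA mulrCA (mul_hstar _ _ (@size_hcoefr u z w)) mulr_sumr.
  by apply: eq_bigr => y _; rewrite mulr_sumr; apply: eq_bigr => v _; ring.
apply: eq_bigr => u _; rewrite sum_rot3; apply: eq_bigr => y _; apply: eq_bigr => v _.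
by rewrite -big_distrl /= sum_hcoefr.
Qed.

Lemma hstarA f g h : hstar (hstar f g) h = hstar f (hstar g h).
Proof. by apply/funext => w; rewrite hstar_hstarl hstar_hstarr. Qed.

Lemma hstar_at f g w : (forall u v, v != w -> hprod u v = w -> g v = hone R v) ->
  hstar f g w = f w + fix_sum f w * (g w - hone R w).
Proof.
move=> g_below; set L := allsinf (sz w).
have -> : hstar f g w = hstar f (hone R) w +
    \sum_(u <- L) \sum_(v <- L) hcoef u v w * f u * (g v - hone R v).
  rewrite !(hstarE _ _ (leqnn _)) -big_split; apply: eq_bigr => u _.
  by rewrite -big_split; apply: eq_bigr => v _ /=; rewrite mulrBr addrC subrK.
rewrite hstarr1 (fix_sumE _ (leqnn _)) big_distrl /=; congr (_ + _).
apply: eq_bigr => u _.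
rewrite (bigD1_seq w) ?mem_allsinf ?allsinf_uniq //= big1 ?addr0 // => v neq_vw.
have [uvw|neq] := eqVneq (hprod u v) w.
  by rewrite (g_below u v) // subrr mulr0.
by rewrite hcoef_eq0 // !mul0r.
Qed.

Lemma hstar_fixed_hone f g : (forall w, non_zero_divisor (fix_sum f w)) ->
  hstar f g = f -> g = hone R.
Proof.
move=> nzd fg_f; apply/funext; apply: hprod_ind => w g_below.
by have := hstar_at f g_below; rewrite fg_f -[LHS]addr0 => /addrI /esym /nzd /subr0_eq.
Qed.

End Convolution.

Theorem lemma4p4 (R : comPzRingType) (f g h : sinf -> R) :
  (forall w : sinf, non_zero_divisor (fix_sum f w)) ->
  (hstar f g = f -> g = hone R) /\
  (hstar f h = hone R -> hstar h f = hone R).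
Proof.
move=> nzd; split; first exact: hstar_fixed_hone.
by move=> fh; apply: (hstar_fixed_hone nzd); rewrite -hstarA fh hstar1l.
Qed.
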